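(* Let $G$ be a loopless simple edge-coloured graph with $n$ vertices and $n$ colours in which every colour class has exactly $3$ edges. Let $N$ be the set of non-star vertices of $G$, and suppose $|N|\ge 8$. Then there exist distinct $x,y\in N$ such that no colour class of $G$ dominates $\{x,y\}$.
   Context: Graphs may have parallel edges. An edge-coloured graph is simple if no colour class (set of edges of one colour) contains two parallel edges. A colour class is a star class if its three edges form a star $K_{1,3}$ (three edges sharing a common vertex, the centre, with three distinct other ends). A vertex is a star vertex if it is the centre of some star class, and a non-star vertex otherwise. A colour class $A$ dominates a pair $\{x,y\}$ of vertices if every edge in $A$ has at least one end in $\{x,y\}$. *)

From mathcomp Require Import all_boot.
Set Implicit Arguments. Unset Strict Implicit. Unset Printing Implicit Defensive.

(* An edge-coloured multigraph: vertices V, edges E (a finite type, so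
   parallel edges are allowed), each edge e has endpoints (ends e).1,
   (ends e).2 and a colour col e. *)

Section ECGraph.
Variables (V E C : finType) (ends : E -> V * V) (col : E -> C).

Definition endset (e : E) : {set V} := [set (ends e).1; (ends e).2].

Definition loopless : Prop := forall e, (ends e).1 != (ends e).2.

Definition parallel (e f : E) : Prop := endset e = endset f.

Definition colour_simple : Prop :=
  forall e f, e != f -> col e = col f -> ~ parallel e f.

Definition colour_class (c : C) : {set E} := [set e | col e == c].

Definition star_class_centre (c : C) (v : V) : bool :=
  [&& #|colour_class c| == 3,
      [forall e in colour_class c, v \in endset e] &
      [forall e in colour_class c, forall f in colour_class c,
         (e != f) ==> (endset e :\ v != endset f :\ v)]].

Definition star_vertex (v : V) : bool := [exists c, star_class_centre c v].

Definition non_star_vertices : {set V} := [set v | ~~ star_vertex v].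

Definition dominates (c : C) (x y : V) : Prop :=
  forall e, e \in colour_class c -> (x \in endset e) \/ (y \in endset e).

End ECGraph.

From mathcomp Require Import all_boot zify.
Set Implicit Arguments. Unset Strict Implicit. Unset Printing Implicit Defensive.

(* Call v a centre of a colour class if v lies on all three of its edges.  By
   simplicity a class has at most one centre, and its centres are exactly its
   star centres.  A centred class dominates no pair of non-star vertices, while
   an uncentred class dominates at most deg x pairs {x, y} for each vertex x,
   hence at most 6 ordered pairs.  Every star vertex is a centre, so there are
   at least |V \ N| centred classes and, as #C = #V, at most |N| uncentred
   ones.  If every pair of non-star vertices were dominated, we would get
   |N| (|N| - 1) <= 6 |N|, i.e. |N| <= 7. *)

Lemma card_bigcup_le (I T : finType) (P : pred I) (F : I -> {set T}) :
  #|\bigcup_(i | P i) F i| <= \sum_(i | P i) #|F i|.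
Proof.
elim/big_ind2: _ => // [|m A k B leA leB]; first by rewrite cards0.
by rewrite (leq_trans (leq_card_setU _ _)) // leq_add.
Qed.

Section ColouredGraph.
Variables (V E C : finType) (ends : E -> V * V) (col : E -> C).
Hypothesis simple : colour_simple ends col.

Local Notation endset := (endset ends).
Local Notation class := (colour_class col).

Lemma card_endset_le2 e : #|endset e| <= 2.
Proof. by rewrite cards2; case: (_ != _). Qed.

Lemma endset_pair e u v :
  u != v -> u \in endset e -> v \in endset e -> endset e = [set u; v].
Proof.
move=> neq_uv ue ve; apply/eqP; rewrite eq_sym eqEcard cards2 neq_uv.
rewrite card_endset_le2 andbT; apply/subsetP => z /set2P [] ->; exact.
Qed.

Definition edges_at v : {set E} := [set e | v \in endset e].

Lemma mem_edges_at v e : (e \in edges_at v) = (v \in endset e).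
Proof. by rewrite in_set. Qed.

Lemma sum_card_edges_at (A : {set E}) : \sum_v #|A :&: edges_at v| <= 2 * #|A|.
Proof.
rewrite mulnC -sum_nat_const.
have card_fibre v : #|A :&: edges_at v| = \sum_(e in A | v \in endset e) 1.
  by rewrite -sum1_card; apply: eq_bigl => e; rewrite in_setI mem_edges_at.
under eq_bigr => v _ do rewrite card_fibre.
rewrite (exchange_big_dep (fun e => e \in A)) => [|v e _ /andP[] //].
apply: leq_sum => e eA.
by rewrite eA sum1_card card_endset_le2.
Qed.

Lemma card_class_edges_at2 c u v : u != v ->
  #|class c :&: edges_at u :&: edges_at v| <= 1.
Proof.
move=> neq_uv; rewrite leqNgt; apply/card_gt1P => -[e [f []]].
rewrite !in_setI !mem_edges_at => /andP[/andP[ec ue] ve] /andP[/andP[fc uf] vf] neq_ef.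
apply: (simple neq_ef); first by move: ec fc; rewrite !inE => /eqP-> /eqP->.
by rewrite /parallel (endset_pair neq_uv ue ve) (endset_pair neq_uv uf vf).
Qed.

Definition common_ends (B : {set E}) : {set V} :=
  [set v | B \subset edges_at v].

Definition centres c := common_ends (class c).

Lemma card_common_ends_le2 (B : {set E}) : B != set0 -> #|common_ends B| <= 2.
Proof.
case/set0Pn => e eB; apply: leq_trans (card_endset_le2 e).
apply: subset_leq_card; apply/subsetP => v.
by rewrite in_set => /subsetP/(_ e eB); rewrite mem_edges_at.
Qed.

Lemma card_common_ends_le1 c (B : {set E}) :
  B \subset class c -> 1 < #|B| -> #|common_ends B| <= 1.
Proof.
move=> sBc gt1B; rewrite leqNgt; apply/card_gt1P => -[u [v [+ + neq_uv]]].
rewrite !in_set => sBu sBv.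
have := card_class_edges_at2 c neq_uv; rewrite leqNgt => /negP; apply.
by apply: leq_trans gt1B (subset_leq_card _); rewrite !subsetI sBc sBu.
Qed.

Definition dominatesb c x y := class c \subset edges_at x :|: edges_at y.

Lemma dominatesP c x y : reflect (dominates ends col c x y) (dominatesb c x y).
Proof.
apply: (iffP subsetP) => dom e /dom; first by rewrite in_setU !mem_edges_at => /orP.
by rewrite in_setU !mem_edges_at => /orP.
Qed.

Hypothesis card_class : forall c, #|class c| = 3.

Lemma centres_star_class c v : (v \in centres c) = star_class_centre ends col c v.
Proof.
rewrite /star_class_centre card_class eqxx /= in_set.
have -> : (class c \subset edges_at v) = [forall e in class c, v \in endset e].
  by apply/subsetP/forall_inP => vc e /vc; rewrite mem_edges_at.
case: forall_inP => //= ve; apply/esym/forall_inP => e ec; apply/forall_inP => f fc.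
apply/implyP => neq_ef; apply/negP => /eqP eq_ends; apply: (simple neq_ef).
  by move: ec fc; rewrite !inE => /eqP-> /eqP->.
by rewrite /parallel -(setD1K (ve e ec)) -(setD1K (ve f fc)) eq_ends.
Qed.

Local Notation N := (non_star_vertices ends col).

Lemma nonstar_notin_centres c x : x \in N -> x \notin centres c.
Proof.
rewrite in_set centres_star_class; apply: contra => xc.
by apply/existsP; exists c.
Qed.

Lemma card_centres_le1 c : #|centres c| <= 1.
Proof. by apply: card_common_ends_le1 (subxx _) _; rewrite card_class. Qed.

Lemma centre_not_dominates c v x y :
  v \in centres c -> x != v -> y != v -> ~~ dominatesb c x y.
Proof.
rewrite in_set /dominatesb => sub_cv neq_xv neq_yv; apply/negP => sub_cxy.
have : class c \subset (class c :&: edges_at x :&: edges_at v)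
                        :|: (class c :&: edges_at y :&: edges_at v).
  by rewrite -setIUl -setIUr !subsetI subxx sub_cv sub_cxy.
move/subset_leq_card/leq_trans/(_ (leq_card_setU _ _)); rewrite card_class.
have := card_class_edges_at2 c neq_xv; have := card_class_edges_at2 c neq_yv.
lia.
Qed.

Lemma card_common_ends_uncentred c (B : {set E}) : centres c = set0 ->
  B \subset class c -> B != set0 -> #|common_ends B| + #|B| <= 3.
Proof.
move=> no_centre sBc B_ne0.
have [le1B|gt1B] := leqP #|B| 1; first by have := card_common_ends_le2 B_ne0; lia.
have [lt3B|ge3B] := ltnP #|B| 3; first by have := card_common_ends_le1 sBc gt1B; lia.
have -> : B = class c by apply/eqP; rewrite eqEcard sBc card_class.
by rewrite -/(centres c) no_centre cards0 card_class.
Qed.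

Lemma card_partners_le_degree c x : centres c = set0 ->
  #|[set y | (y != x) && dominatesb c x y]| <= #|class c :&: edges_at x|.
Proof.
move=> no_centre; set B := class c :\: edges_at x.
have : x \notin centres c by rewrite no_centre in_set0.
rewrite in_set -setD_eq0 -/B => B_ne0.
have sub_partners : [set y | (y != x) && dominatesb c x y] \subset common_ends B.
  apply/subsetP => y; rewrite !in_set => /andP[_ /subsetP dom]; apply/subsetP => e.
  by rewrite in_setD => /andP[/negbTE xe /dom]; rewrite in_setU xe.
have := subset_leq_card sub_partners; have := cardsID (edges_at x) (class c).
have := card_common_ends_uncentred no_centre (subsetDl _ _) B_ne0.
rewrite card_class -/B; lia.
Qed.

Definition uncentred_classes := [set c | centres c == set0].

Lemma card_uncentred_classes : #|C| = #|V| -> #|uncentred_classes| <= #|N|.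
Proof.
move=> card_CV.
have star_sub : ~: N \subset \bigcup_c centres c.
  apply/subsetP => v; rewrite in_setC in_set negbK => /existsP[c].
  by rewrite -centres_star_class => vc; apply/bigcupP; exists c.
have : \sum_c #|centres c| <= #|~: uncentred_classes|.
  rewrite -sum1_card [leqRHS]big_mkcond; apply: leq_sum => c _; rewrite in_setC in_set.
  by case: eqP => [->|_]; rewrite ?cards0 ?card_centres_le1.
have := leq_trans (subset_leq_card star_sub) (card_bigcup_le _ _).
have := cardsC N; have := cardsC uncentred_classes; lia.
Qed.

Section DominatedPairs.
Hypothesis pairs_dominated : forall x y,
  x \in N -> y \in N -> x != y -> exists c, dominatesb c x y.

Lemma card_nonstar_le_degree x : x \in N ->
  #|N| - 1 <= \sum_(c in uncentred_classes) #|class c :&: edges_at x|.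
Proof.
move=> xN; rewrite (cardsD1 x N) xN add1n subn1 /=.
have cover : N :\ x \subset
    \bigcup_(c in uncentred_classes) [set y | (y != x) && dominatesb c x y].
  apply/subsetP => y; rewrite in_setD1 eq_sym => /andP[neq_xy yN].
  have [c dom] := pairs_dominated xN yN neq_xy.
  apply/bigcupP; exists c; last by rewrite in_set eq_sym neq_xy.
  rewrite in_set; apply/eqP/setP => v; rewrite in_set0; apply/negbTE/negP => vc.
  apply: (negP (centre_not_dominates vc _ _)) dom.
    by apply: contraNneq (nonstar_notin_centres c xN) => ->.
  by apply: contraNneq (nonstar_notin_centres c yN) => ->.
apply: leq_trans (subset_leq_card cover) _; apply: leq_trans (card_bigcup_le _ _) _.
by apply: leq_sum => c; rewrite in_set => /eqP; apply: card_partners_le_degree.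
Qed.

Lemma card_nonstar_le7 : #|C| = #|V| -> #|N| <= 7.
Proof.
move=> card_CV; set U := uncentred_classes.
have : #|N| * (#|N| - 1) <= #|N| * 6.
  rewrite -sum_nat_const.
  apply: (@leq_trans (\sum_(x in N) \sum_(c in U) #|class c :&: edges_at x|)).
    by apply: leq_sum => x; apply: card_nonstar_le_degree.
  apply: (@leq_trans (\sum_x \sum_(c in U) #|class c :&: edges_at x|)).
    by rewrite [leqRHS](bigID (mem N)) leq_addr.
  rewrite exchange_big /=; apply: (@leq_trans (\sum_(c in U) 6)).
    by apply: leq_sum => c _; have := sum_card_edges_at (class c); rewrite card_class.
  by rewrite sum_nat_const leq_mul2r card_uncentred_classes ?orbT.
by case: (posnP #|N|) => [->|N_gt0] //; rewrite leq_pmul2l //; lia.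
Qed.

End DominatedPairs.

End ColouredGraph.

Theorem claim3p6 (n : nat) (V E C : finType) (ends : E -> V * V) (col : E -> C) :
  #|V| = n -> #|C| = n ->
  loopless ends -> colour_simple ends col ->
  (forall c : C, #|colour_class col c| = 3) ->
  8 <= #|non_star_vertices ends col| ->
  exists x y : V,
    [/\ x != y, x \in non_star_vertices ends col, y \in non_star_vertices ends col &
        forall c : C, ~ dominates ends col c x y].
Proof.
move=> card_V card_C _ simple card_class ge8_N.
set N := non_star_vertices ends col.
have [|no_good_pair] := boolP [exists x, exists y,
  [&& x != y, x \in N, y \in N & [forall c, ~~ dominatesb ends col c x y]]].
  case/existsP=> x /existsP[y /and4P[neq_xy xN yN /forallP undominated]].
  by exists x, y; split=> // c /dominatesP; apply/negP; apply: undominated.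
suff : #|N| <= 7 by rewrite leqNgt ge8_N.
apply: card_nonstar_le7 simple card_class _ _; last by rewrite card_V card_C.
move=> x y xN yN neq_xy; move/existsPn/(_ x)/existsPn/(_ y): no_good_pair.
by rewrite neq_xy xN yN /= => /forallPn[c]; rewrite negbK; exists c.
Qed.
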